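(* Let $n\ge1$, $X=\{1,\dots,n\}$, $\mathcal{A}$ the algebra of all functions $X\to\mathbb{R}$ with pointwise operations, $\sigma:X\to X$ a bijection and $\tilde{\sigma}(f)=f\circ\sigma^{-1}$. The centralizer of $\mathcal{A}$ in the skew-Laurent ring $\mathcal{A}[x,x^{-1};\tilde{\sigma}]$ is $$C(\mathcal{A})=\Big\{\sum_{n\in\mathbb{Z}} f_nx^n : f_n\in\mathcal{A},\ f_n=0\text{ for all but finitely many } n,\ f_n=0\text{ on } Sep^n(X)\text{ for all } n\Big\}.$$
   Context: The skew-Laurent ring $\mathcal{A}[x,x^{-1};\tilde{\sigma}]$ is the ring containing $\mathcal{A}$ as a subring and an invertible element $x$ such that it is a free left $\mathcal{A}$-module with basis $\{x^n:n\in\mathbb{Z}\}$ and $xf=\tilde{\sigma}(f)x$, $x^{-1}f=\tilde{\sigma}^{-1}(f)x^{-1}$ for all $f\in\mathcal{A}$. For an integer $n$, $Sep^n(X)=\{p\in X:\sigma^n(p)\neq p\}$ (so $Sep^0(X)=\emptyset$). *)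

From HB Require Import structures.
From mathcomp Require Import all_boot all_order all_algebra all_fingroup.
From mathcomp Require Import Rstruct.
Set Implicit Arguments. Unset Strict Implicit. Unset Printing Implicit Defensive.
Import Order.TTheory GRing.Theory Num.Theory.
Local Open Scope ring_scope.

Definition Alg (n : nat) := {ffun 'I_n -> Rdefinitions.R}.
Definition Azero n : Alg n := [ffun _ => 0].
Definition Aadd n (f g : Alg n) : Alg n := [ffun i => f i + g i].
Definition Amul n (f g : Alg n) : Alg n := [ffun i => f i * g i].

Definition permz n (s : {perm 'I_n}) (m : int) : {perm 'I_n} :=
  match m with
  | Posz k => (s ^+ k)%g
  | Negz k => ((s^-1) ^+ k.+1)%g
  end.

Definition sigt n (s : {perm 'I_n}) (m : int) (f : Alg n) : Alg n :=
  [ffun i => f (permz s (- m) i)].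

Definition Sep n (s : {perm 'I_n}) (m : int) : {set 'I_n} :=
  [set p | permz s m p != p].

(* Elements of the skew-Laurent ring A[x,x^{-1}; tilde-sigma]: formal finite
   sums  \sum_t (t.2) x^(t.1)  (left coefficients).  Two formal sums denote the
   same ring element iff they have the same coefficient functions [slcoef]. *)
Definition SL (n : nat) := seq (int * Alg n).

Definition slcoef n (p : SL n) (k : int) : Alg n :=
  foldr (fun t acc => if t.1 == k then Aadd t.2 acc else acc) (Azero n) p.

Definition slconst n (f : Alg n) : SL n := [:: ((0 : int), f)].

(* multiplication, extended bilinearly from
   (f x^m)(g x^k) = f tilde-sigma^m(g) x^(m+k) *)
Definition slmul n (s : {perm 'I_n}) (p q : SL n) : SL n :=
  [seq (t.1 + u.1, Amul t.2 (sigt s t.1 u.2)) | t <- p, u <- q].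

Definition sleq n (p q : SL n) : Prop := forall k, slcoef p k = slcoef q k.

Definition in_centralizer n (s : {perm 'I_n}) (p : SL n) : Prop :=
  forall f : Alg n, sleq (slmul s (slconst f) p) (slmul s p (slconst f)).

From HB Require Import structures.
From mathcomp Require Import all_boot all_order all_algebra all_fingroup.
From mathcomp Require Import Rstruct.
Set Implicit Arguments. Unset Strict Implicit. Unset Printing Implicit Defensive.
Local Open Scope ring_scope.
Import GRing.Theory.

(* The coefficient of x^k in f p is f p_k, while in p f it is p_k (f o sigma^-k).
   So p commutes with every f iff p_k(i) f(i) = p_k(i) f(sigma^-k(i)) for all f,
   and testing with the indicator function of i shows that this forces
   p_k(i) = 0 exactly when sigma^-k(i) <> i, i.e. when i is in Sep^k(X). *)

Section SkewLaurentCoefficients.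

Variables (n : nat) (s : {perm 'I_n}).

Lemma slcoef_const_mul (f : Alg n) (p : SL n) k :
  slcoef (slmul s (slconst f) p) k = [ffun i => f i * slcoef p k i].
Proof.
rewrite /slmul /slconst /= cats0.
elim: p => [|a p IHp] /=; first by apply/ffunP => i; rewrite !ffunE mulr0.
rewrite add0r; case: (a.1 == k); rewrite IHp //.
by apply/ffunP => i; rewrite !ffunE /= mulrDr expg0 perm1.
Qed.

Lemma slcoef_mul_const (f : Alg n) (p : SL n) k :
  slcoef (slmul s p (slconst f)) k =
  [ffun i => slcoef p k i * f (permz s (- k) i)].
Proof.
rewrite /slmul /slconst.
elim: p => [|a p IHp] /=; first by apply/ffunP => i; rewrite !ffunE mul0r.
rewrite /= in IHp; rewrite addr0; case: eqP => [a1k|_]; rewrite IHp //.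
by apply/ffunP => i; rewrite !ffunE /= mulrDl a1k.
Qed.

Lemma in_centralizerE (p : SL n) :
  in_centralizer s p <->
  (forall (f : Alg n) k i, f i * slcoef p k i = slcoef p k i * f (permz s (- k) i)).
Proof.
split=> [cp f k i | cp f k].
  by have /ffunP/(_ i) := cp f k; rewrite slcoef_const_mul slcoef_mul_const !ffunE.
by rewrite slcoef_const_mul slcoef_mul_const; apply/ffunP => i; rewrite !ffunE.
Qed.

Lemma permzN k : permz s (- k) = (permz s k)^-1%g.
Proof. by case: k => [[|m]|m] /=; rewrite ?invg1 ?expgVn ?invgK. Qed.

Lemma permzN_fix k i : (permz s (- k) i == i) = (permz s k i == i).
Proof.
rewrite permzN; apply/eqP/eqP => [fixi | fixi]; last by rewrite -{1}fixi permK.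
by rewrite -{1}fixi permKV.
Qed.

Lemma in_SepN k i : (i \in Sep s k) = (permz s (- k) i != i).
Proof. by rewrite inE permzN_fix. Qed.

End SkewLaurentCoefficients.

Lemma commute_all_evaluations (T : finType) (R : comNzRingType) (i j : T) (c : R) :
  (forall f : {ffun T -> R}, f i * c = c * f j) <-> (j = i \/ c = 0).
Proof.
split=> [fc | [-> | ->] f]; last by rewrite mulr0 mul0r.
  have := fc [ffun t => (t == i)%:R]; rewrite !ffunE eqxx mul1r.
  by case: eqP => [|_ ->]; [left | right; rewrite mulr0].
by rewrite mulrC.
Qed.

Theorem theorem12 (n : nat) (hn : (0 < n)%N) (s : {perm 'I_n}) (p : SL n) :
  in_centralizer s p <->
  (forall (k : int) (i : 'I_n), i \in Sep s k -> slcoef p k i = 0%R).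
Proof.
rewrite in_centralizerE; split=> [cp k i | p0 f k i].
  rewrite in_SepN => /eqP moved.
  by case: ((commute_all_evaluations _ _ _).1 (fun f => cp f k i)).
apply: (commute_all_evaluations _ _ _).2.
have [/p0|] := boolP (i \in Sep s k); first by right.
by rewrite in_SepN negbK => /eqP; left.
Qed.
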